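(* There exist a finite $2$-dimensional simplicial complex $K$ embedded in $\mathbb{R}^2$ and a $1$-cycle $c\in Z_1(K;\mathbb{R})$ such that the minimum cardinality of a homological edge cut for $[c]$ is $\mathrm{mc}=3$, while the optimal value of the linear program \[ \widetilde{\mathrm{mc}}=\min\{\|\varphi\|_1:\ \varphi\in C^1(K;\mathbb{R}),\ \partial^*\varphi=0,\ \varphi(c)=1\} \] equals that of its dual $\mathrm{mf}=\max\{r:\ (B,r)\in C_2(K;\mathbb{R})\times\mathbb{R},\ \|\partial B+r c\|_\infty\le1\}$, namely $\widetilde{\mathrm{mc}}=\mathrm{mf}=3/2$. In particular $\mathrm{mf}<\mathrm{mc}$, so the linear programming relaxation is not tight in general.
   Context: For $A\subseteq K$, $K-A$ is the largest subcomplex of $K$ containing no simplex of $A$. $C\subseteq K^{(1)}$ is a homological edge cut for $\gamma\in H_1(K;\mathbb{R})$ if $\gamma\notin\mathrm{Im}(H_1(K-C;\mathbb{R})\to H_1(K;\mathbb{R}))$. $C^1(K;\mathbb{R})=\mathrm{Hom}(C_1(K;\mathbb{R}),\mathbb{R})$ with coboundary $(\partial^*\varphi)(\sigma)=\varphi(\partial\sigma)$; cochains and chains are viewed as vectors in the standard basis of (oriented) simplices, and $\|\cdot\|_1$, $\|\cdot\|_\infty$ are the corresponding $\ell^1$ and $\ell^\infty$ norms. *)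

From HB Require Import structures.
From mathcomp Require Import all_boot all_order all_algebra.
From Stdlib Require Import Rdefinitions.
From mathcomp Require Import Rstruct.
Set Implicit Arguments. Unset Strict Implicit. Unset Printing Implicit Defensive.
Import Order.TTheory GRing.Theory Num.Theory.
Local Open Scope ring_scope.

Section SimplicialDefs.
Variable n : nat.
Notation V := 'I_n.
Notation cplx := {set {set V}}.

Definition is_complex (K : cplx) : Prop :=
  set0 \notin K /\
  forall s t : {set V}, s \in K -> t \subset s -> t != set0 -> t \in K.

Definition is_2dim (K : cplx) : Prop :=
  (forall s, s \in K -> leq #|s| 3) /\ exists s, s \in K /\ #|s| = 3 :> nat.

(* K - A : the largest subcomplex of K containing no simplex of A
   (union of all subcomplexes L of K disjoint from A) *)
Definition cplx_minus (K A : cplx) : cplx :=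
  [set s in K | [exists L : cplx,
     [&& L \subset K, s \in L, [disjoint L & A] &
        [forall s' : {set V}, forall t : {set V}, [&& s' \in L, t \subset s' & t != set0] ==> (t \in L)]]]].

Definition edges (K : cplx) : {set {set V}} := [set s in K | #|s| == 2 :> nat].
Definition triangles (K : cplx) : {set {set V}} := [set s in K | #|s| == 3 :> nat].

(* real k-chains of K (k-simplices oriented by increasing vertex order),
   and 1-cochains, as functions on vertex sets supported on k-simplices of K *)
Definition is_chain (K : cplx) (k : nat) (c : {set V} -> R) : Prop :=
  forall s, c s != 0 -> s \in K /\ #|s| = k.+1.

(* boundary operator: the face t of (v |: t) has sign (-1)^(position of v) *)
Definition bd (c : {set V} -> R) : {set V} -> R := fun t =>
  \sum_(v : V | v \notin t)
     (-1) ^+ #|[set u in t | ltn (val u) (val v)]| * c (v |: t).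

Definition delta (s : {set V}) : {set V} -> R := fun t => if t == s then 1 else 0.

Definition pair (phi c : {set V} -> R) : R := \sum_(t : {set V}) phi t * c t.

Definition is_cycle (K : cplx) (c : {set V} -> R) : Prop :=
  is_chain K 1 c /\ forall t, bd c t = 0.

(* C is a homological edge cut for [c] in H_1(K;R): [c] is not in the image of
   H_1(K - C;R) -> H_1(K;R), i.e. there is no 1-cycle z of K - C and no
   2-chain B of K with c - z = bd B *)
Definition is_hom_edge_cut (K : cplx) (c : {set V} -> R) (C : cplx) : Prop :=
  C \subset edges K /\
  ~ (exists (z B : {set V} -> R),
        is_cycle (cplx_minus K C) z /\ is_chain K 2 B /\
        forall t, c t - z t = bd B t).

Definition min_cut_is (K : cplx) (c : {set V} -> R) (m : nat) : Prop :=
  (exists C, is_hom_edge_cut K c C /\ #|C| = m) /\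
  (forall C, is_hom_edge_cut K c C -> leq m #|C|).

Definition norm1 (K : cplx) (phi : {set V} -> R) : R :=
  \sum_(e in edges K) `|phi e|.

Definition lp_feasible (K : cplx) (c phi : {set V} -> R) : Prop :=
  is_chain K 1 phi /\
  (forall s, s \in triangles K -> pair phi (bd (delta s)) = 0) /\
  pair phi c = 1.

Definition lp_min_is (K : cplx) (c : {set V} -> R) (x : R) : Prop :=
  (exists phi, lp_feasible K c phi /\ norm1 K phi = x) /\
  (forall phi, lp_feasible K c phi -> x <= norm1 K phi).

Definition dual_feasible (K : cplx) (c B : {set V} -> R) (r : R) : Prop :=
  is_chain K 2 B /\ forall e, e \in edges K -> `|bd B e + r * c e| <= 1.

Definition dual_max_is (K : cplx) (c : {set V} -> R) (x : R) : Prop :=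
  (exists B, dual_feasible K c B x) /\
  (forall B r, dual_feasible K c B r -> r <= x).

Definition in_hull (p : V -> 'rV[R]_2) (s : {set V}) (x : 'rV[R]_2) : Prop :=
  exists lam : V -> R,
    (forall i, 0 <= lam i) /\ (forall i, i \notin s -> lam i = 0) /\
    \sum_i lam i = 1 /\ x = \sum_i lam i *: p i.

Definition aff_indep (p : V -> 'rV[R]_2) (s : {set V}) : Prop :=
  forall mu : V -> R, (forall i, i \notin s -> mu i = 0) ->
    \sum_i mu i = 0 -> \sum_i mu i *: p i = 0 -> forall i, mu i = 0.

Definition embeds_in_R2 (K : cplx) (p : V -> 'rV[R]_2) : Prop :=
  (forall s, s \in K -> aff_indep p s) /\
  (forall s t x, s \in K -> t \in K -> in_hull p s x -> in_hull p t x ->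
      in_hull p (s :&: t) x).

End SimplicialDefs.

(* K is a triangulated annulus between an inner triangle 012 and an outer triangle 345,
   and c is twice the inner boundary loop.  Twice the zigzag through the annulus and
   twice the outer loop are homologous to c, and the three cycles have pairwise disjoint
   supports.  A homological edge cut must meet every cycle homologous to c, so it has at
   least three edges; the radial path 01, 13, 34 is such a cut.  Half the signed
   indicator of that path is a cocycle with value 1 on c and l1-norm 3/2.  Dually, if
   bd B1 = inner - zigzag and bd B2 = inner - outer, then for B = -(B1 + B2) the chain
   bd B + (3/2) c = inner + zigzag + outer has all coefficients +-1.  Pairing a feasible
   cocycle phi with bd B + r c gives r <= ||phi||_1, so both optima equal 3/2. *)

From HB Require Import structures.
From mathcomp Require Import all_boot all_order all_algebra.
From Stdlib Require Import Rdefinitions.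
From mathcomp Require Import Rstruct.
From mathcomp.algebra_tactics Require Import ring lra.
Set Implicit Arguments. Unset Strict Implicit. Unset Printing Implicit Defensive.
Import Order.TTheory GRing.Theory Num.Theory.
Local Open Scope ring_scope.

(** * Cuts, cocycles and duality *)

Section Homology.
Variable n : nat.
Implicit Types (K C : {set {set 'I_n}}) (c z phi f g B : {set 'I_n} -> R).
Implicit Types (s t T : {set 'I_n}).

Lemma cplx_minus_notin K C s : s \in cplx_minus K C -> s \notin C.
Proof.
rewrite inE => /andP[_ /existsP[L /and4P[_ sL dLC _]]].
by rewrite (disjointFr dLC sL).
Qed.

Lemma edge_cplx_minus K C s : is_complex K -> C \subset edges K ->
  s \in edges K -> s \notin C -> s \in cplx_minus K C.
Proof.
move=> [_ K_closed] CE; rewrite inE => /andP[sK /eqP s2] sC.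
(* The faces of s form a subcomplex, and s is its only edge. *)
rewrite inE sK; apply/existsP; exists [set t : {set 'I_n} | (t \subset s) && (t != set0)].
have sn : s != set0 by rewrite -card_gt0 s2.
apply/and4P; split.
- by apply/subsetP => t; rewrite inE => /andP[ts tn]; apply: K_closed sK ts tn.
- by rewrite inE subxx sn.
- rewrite disjoints_subset; apply/subsetP => t; rewrite !inE => /andP[ts tn].
  apply: contra sC => tC.
  have := subsetP CE t tC; rewrite inE => /andP[_ /eqP t2].
  by have /eqP <- : t == s by rewrite eqEcard ts s2 t2.
- apply/forallP => s'; apply/forallP => t; apply/implyP => /and3P[].
  rewrite !inE => /andP[s's _] ts' ->; rewrite andbT.
  exact: subset_trans ts' s's.
Qed.

Lemma eq_bd f g t : f =1 g -> bd f t = bd g t.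
Proof. by move=> fg; apply: eq_bigr => v _; rewrite fg. Qed.

Lemma bd0 t : bd (fun _ => 0) t = 0.
Proof. by rewrite /bd big1 // => v _; rewrite mulr0. Qed.

Lemma bdD f g t : bd (fun s => f s + g s) t = bd f t + bd g t.
Proof. by rewrite /bd -big_split; apply: eq_bigr => v _; rewrite mulrDr. Qed.

Lemma bdZ a f t : bd (fun s => a * f s) t = a * bd f t.
Proof. by rewrite /bd mulr_sumr; apply: eq_bigr => v _; rewrite mulrCA. Qed.

Lemma bd_sum (I : finType) (F : I -> {set 'I_n} -> R) t :
  bd (fun s => \sum_i F i s) t = \sum_i bd (F i) t.
Proof. by rewrite /bd exchange_big; apply: eq_bigr => v _; rewrite mulr_sumr. Qed.

Lemma bd_deltaE B t : bd B t = \sum_T B T * bd (delta T) t.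
Proof.
under eq_bigr do rewrite -bdZ; rewrite -bd_sum; apply: eq_bd => s.
rewrite (bigD1 s) //= big1 => [|T /negbTE Ts]; first by rewrite /delta eqxx mulr1 addr0.
by rewrite /delta eq_sym Ts mulr0.
Qed.

Lemma eq_pair phi f g : f =1 g -> pair phi f = pair phi g.
Proof. by move=> fg; apply: eq_bigr => t _; rewrite fg. Qed.

Lemma pairDr phi f g : pair phi (fun t => f t + g t) = pair phi f + pair phi g.
Proof. by rewrite /pair -big_split; apply: eq_bigr => t _; rewrite mulrDr. Qed.

Lemma pairBr phi f g : pair phi (fun t => f t - g t) = pair phi f - pair phi g.
Proof. by rewrite /pair -sumrB; apply: eq_bigr => t _; rewrite mulrBr. Qed.

Lemma pairZr a phi f : pair phi (fun t => a * f t) = a * pair phi f.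
Proof. by rewrite /pair mulr_sumr; apply: eq_bigr => t _; rewrite mulrCA. Qed.

Lemma pairZl a phi f : pair (fun t => a * phi t) f = a * pair phi f.
Proof. by rewrite /pair mulr_sumr; apply: eq_bigr => t _; rewrite mulrA. Qed.

Lemma pair_edges K phi f : is_chain K 1 phi ->
  pair phi f = \sum_(e in edges K) phi e * f e.
Proof.
move=> phiK; rewrite /pair [RHS]big_mkcond; apply: eq_bigr => t _.
case: ifPn => // tE; have [->|/phiK[tK t2]] := eqVneq (phi t) 0; first by rewrite mul0r.
by move: tE; rewrite inE tK t2 eqxx.
Qed.

Lemma norm1_le_sum K phi : norm1 K phi <= \sum_e `|phi e|.
Proof.
rewrite [X in _ <= X](bigID (mem (edges K))) /= lerDl.
by apply: sumr_ge0 => e _.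
Qed.

Lemma cocycle_pair_bd K phi B :
  (forall s, s \in triangles K -> pair phi (bd (delta s)) = 0) ->
  is_chain K 2 B -> pair phi (bd B) = 0.
Proof.
move=> phi_cocycle BK; rewrite (eq_pair phi (bd_deltaE B)) /pair.
under eq_bigr do rewrite mulr_sumr; rewrite exchange_big big1 // => T _.
under eq_bigr do rewrite mulrCA; rewrite -mulr_sumr.
have [->|/BK[TK T3]] := eqVneq (B T) 0; first by rewrite mul0r.
by rewrite [X in _ * X]phi_cocycle ?mulr0 // inE TK T3 eqxx.
Qed.

Lemma weak_duality K c phi B r :
  lp_feasible K c phi -> dual_feasible K c B r -> r <= norm1 K phi.
Proof.
move=> [phiK [phi_cocycle phic]] [BK Bbound].
have -> : r = pair phi (fun t => bd B t + r * c t).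
  by rewrite pairDr pairZr phic mulr1 (cocycle_pair_bd phi_cocycle BK) add0r.
rewrite (pair_edges _ phiK); apply: ler_sum => e eE.
apply: le_trans (ler_norm _) _; rewrite normrM.
by apply: ler_piMr => //; apply: Bbound.
Qed.

Lemma lp_dual_optimal K c phi B x :
  lp_feasible K c phi -> dual_feasible K c B x -> norm1 K phi <= x ->
  lp_min_is K c x /\ dual_max_is K c x.
Proof.
move=> phiF BF phi_le.
have lower phi' : lp_feasible K c phi' -> x <= norm1 K phi'.
  by move=> phi'F; apply: weak_duality phi'F BF.
split; split=> //.
- by exists phi; split=> //; apply/le_anti; rewrite phi_le lower.
- by exists B.
- by move=> B' r B'F; apply: le_trans (weak_duality phiF B'F) phi_le.
Qed.

Lemma cocycle_supported_cut K c C phi :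
  lp_feasible K c phi -> C \subset edges K -> (forall t, phi t != 0 -> t \in C) ->
  is_hom_edge_cut K c C.
Proof.
move=> [_ [phi_cocycle phic]] CE phiC; split=> // -[z [B [[zKC _] [BK czB]]]].
have := eq_pair phi czB; rewrite (cocycle_pair_bd phi_cocycle BK) pairBr phic.
suff -> : pair phi z = 0 by rewrite subr0 => /eqP; rewrite oner_eq0.
rewrite /pair big1 // => t _.
have [->|/phiC tC] := eqVneq (phi t) 0; first by rewrite mul0r.
have [->|/zKC[tKC _]] := eqVneq (z t) 0; first by rewrite mulr0.
by move: (cplx_minus_notin tKC); rewrite tC.
Qed.

Lemma cut_meets_homologous_cycle K c C z B :
  is_complex K -> is_hom_edge_cut K c C ->
  is_cycle K z -> is_chain K 2 B -> (forall t, c t - z t = bd B t) ->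
  exists2 e, z e != 0 & e \in C.
Proof.
move=> Kcplx [CE not_homologous] [zK zcycle] BK czB.
have [/existsP[e /andP[ze eC]]|none] := boolP [exists e, (z e != 0) && (e \in C)].
  by exists e.
case: not_homologous; exists z, B; split=> //; split=> // s zs.
have [sK s2] := zK s zs; split=> //; apply: edge_cplx_minus => //.
  by rewrite inE sK s2 eqxx.
by apply: contra none => sC; apply/existsP; exists s; rewrite zs.
Qed.

Lemma cut_card_ge (I : finType) K c C (z : I -> {set 'I_n} -> R) :
  is_complex K -> is_hom_edge_cut K c C ->
  (forall i, is_cycle K (z i) /\
     exists2 B, is_chain K 2 B & forall t, c t - z i t = bd B t) ->
  (forall i j e, z i e != 0 -> z j e != 0 -> i = j) ->
  leq #|I| #|C|.
Proof.
move=> Kcplx cutC z_homologous z_disjoint.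
pose f i := odflt set0 [pick e | (z i e != 0) && (e \in C)].
have fP i : (z i (f i) != 0) && (f i \in C).
  rewrite /f; case: pickP => //= none.
  have [zi [B BK czB]] := z_homologous i.
  have [e ze eC] := cut_meets_homologous_cycle Kcplx cutC zi BK czB.
  by move: (none e); rewrite ze eC.
have f_inj : injective f.
  move=> i j fij; apply: (z_disjoint i j (f i)); first by case/andP: (fP i).
  by rewrite fij; case/andP: (fP j).
rewrite -cardsT -(card_imset _ f_inj); apply: subset_leq_card.
by apply/subsetP => _ /imsetP[i _ ->]; case/andP: (fP i).
Qed.

End Homology.

(** * Convex hulls in the plane *)

Section Geometry.
Variables (n : nat) (p : 'I_n -> 'rV[R]_2).
Implicit Types (s t S T : {set 'I_n}) (lam mu : 'I_n -> R).

Lemma in_hull_sub s T x : s \subset T -> in_hull p s x -> in_hull p T x.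
Proof.
move=> sT [lam [lam_ge0 [lam_out lamE]]]; exists lam; split=> //; split=> // i iT.
by apply: lam_out; apply: contra iT => /(subsetP sT).
Qed.

Lemma aff_indep_sub s T : s \subset T -> aff_indep p T -> aff_indep p s.
Proof.
move=> sT pT mu mu_out; apply: pT => i iT.
by apply: mu_out; apply: contra iT => /(subsetP sT).
Qed.

Lemma barycentric_unique T lam mu : aff_indep p T ->
  (forall i, i \notin T -> lam i = 0) -> (forall i, i \notin T -> mu i = 0) ->
  \sum_i lam i = 1 -> \sum_i mu i = 1 ->
  \sum_i lam i *: p i = \sum_i mu i *: p i -> lam =1 mu.
Proof.
move=> pT lam_out mu_out lam1 mu1 lam_mu i; apply/eqP; rewrite -subr_eq0; apply/eqP.
move: i; apply: (pT (fun i => lam i - mu i)).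
- by move=> i iT; rewrite lam_out ?mu_out ?subr0.
- by rewrite sumrB lam1 mu1 subrr.
- under eq_bigr do rewrite scalerBl.
  by rewrite sumrB lam_mu subrr.
Qed.

(* By uniqueness of barycentric coordinates, the coordinates of x in S :&: T are its
   coordinates in s and in t, so they vanish off s :&: t. *)
Lemma in_hull_meet_faces s t S T x : s \subset S -> t \subset T ->
  aff_indep p S -> aff_indep p T ->
  (in_hull p S x -> in_hull p T x -> in_hull p (S :&: T) x) ->
  in_hull p s x -> in_hull p t x -> in_hull p (s :&: t) x.
Proof.
move=> sS tT pS pT ST_meet xs xt.
have [nu [nu_ge0 [nu_out [nu1 xE]]]] := ST_meet (in_hull_sub sS xs) (in_hull_sub tT xt).
have outS i : i \notin S -> nu i = 0 by move=> iS; rewrite nu_out // inE (negbTE iS).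
have outT i : i \notin T -> nu i = 0 by move=> iT; rewrite nu_out // inE (negbTE iT) andbF.
case: xs => [lam [_ [lam_out [lam1 xlam]]]]; case: xt => [mu [_ [mu_out [mu1 xmu]]]].
have nu_lam := barycentric_unique pS outS (fun i => lam_out i \o contra (subsetP sS i))
  nu1 lam1 (etrans (esym xE) xlam).
have nu_mu := barycentric_unique pT outT (fun i => mu_out i \o contra (subsetP tT i))
  nu1 mu1 (etrans (esym xE) xmu).
exists nu; split=> //; split=> // i; rewrite inE negb_and => /orP[ns|nt].
  by rewrite nu_lam lam_out.
by rewrite nu_mu mu_out.
Qed.

Definition affine_form (a b c : R) (y : 'rV[R]_2) :=
  a * y ord0 ord0 + b * y ord0 ord_max + c.

Lemma affine_form_comb a b c lam : \sum_i lam i = 1 ->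
  affine_form a b c (\sum_i lam i *: p i) = \sum_i lam i * affine_form a b c (p i).
Proof.
move=> lam1; rewrite /affine_form !summxE -[X in _ + X = _]mulr1 -lam1.
rewrite !mulr_sumr -!big_split; apply: eq_bigr => i _ /=; rewrite !mxE; ring.
Qed.

(* The form is <= 0 at x as a point of the hull of s and >= 0 as a point of the hull of
   t, so it vanishes at x; then the coordinates of x in s are supported where the form
   vanishes, which lies in t. *)
Lemma in_hull_meet_separated a b c s t x :
  (forall i, i \in s -> affine_form a b c (p i) <= 0) ->
  (forall i, i \in t -> 0 <= affine_form a b c (p i)) ->
  (forall i, i \in s -> affine_form a b c (p i) = 0 -> i \in t) ->
  in_hull p s x -> in_hull p t x -> in_hull p (s :&: t) x.
Proof.
move=> s_le0 t_ge0 s_zero [lam [lam_ge0 [lam_out [lam1 xlam]]]].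
move=> [mu [mu_ge0 [mu_out [mu1 xmu]]]].
pose F i := affine_form a b c (p i).
have lamF_le0 i : lam i * F i <= 0.
  by have [/s_le0|/lam_out->] := boolP (i \in s); [apply: mulr_ge0_le0 | rewrite mul0r].
have muF_ge0 i : 0 <= mu i * F i.
  by have [/t_ge0|/mu_out->] := boolP (i \in t); [apply: mulr_ge0 | rewrite mul0r].
have form_lam : affine_form a b c x = \sum_i lam i * F i by rewrite xlam affine_form_comb.
have form_mu : affine_form a b c x = \sum_i mu i * F i by rewrite xmu affine_form_comb.
have sum_lamF : \sum_i - (lam i * F i) = 0.
  rewrite sumrN -form_lam; apply/eqP; rewrite oppr_eq0 eq_le; apply/andP; split.
    by rewrite form_lam; apply: sumr_le0 => i _; apply: lamF_le0.
  by rewrite form_mu; apply: sumr_ge0 => i _; apply: muF_ge0.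
have lamF_eq0 i : lam i * F i = 0.
  have nonneg j : true -> 0 <= - (lam j * F j) by rewrite oppr_ge0 lamF_le0.
  by apply/eqP; rewrite -oppr_eq0; apply/eqP; apply: (psumr_eq0P nonneg sum_lamF).
exists lam; split=> //; split=> // i; rewrite inE negb_and.
have [i_s|/lam_out //] := boolP (i \in s); rewrite orFb => nt.
have /eqP := lamF_eq0 i; rewrite mulf_eq0 => /orP[/eqP //|/eqP /(s_zero i i_s)].
by rewrite (negbTE nt).
Qed.

Definition orient (u v w : 'rV[R]_2) :=
  (v ord0 ord0 - u ord0 ord0) * (w ord0 ord_max - u ord0 ord_max)
  - (w ord0 ord0 - u ord0 ord0) * (v ord0 ord_max - u ord0 ord_max).

Lemma aff_indep3 i j k : i != j -> i != k -> j != k ->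
  orient (p i) (p j) (p k) != 0 -> aff_indep p [set i; j; k].
Proof.
move=> ij ik jk Dneq0 mu mu_out.
have sum3 (F : 'I_n -> R) : (forall l, l \notin [set i; j; k] -> F l = 0) ->
    \sum_l F l = F i + F j + F k.
  move=> F_out; rewrite (bigID (mem [set i; j; k])) /= [X in _ + X]big1 => [|l /F_out //].
  have k_ij : k \notin [set i; j] by rewrite !inE negb_or ![k == _]eq_sym ik jk.
  have i_j : i \notin [set j] by rewrite inE.
  by rewrite addr0 setUC big_setU1 // big_setU1 // big_set1 addrC.
have coord (m : 'I_2) : (\sum_l mu l *: p l) ord0 m = \sum_l mu l * p l ord0 m.
  by rewrite summxE; apply: eq_bigr => l _; rewrite mxE.
rewrite sum3 // => mu1 /(congr1 (fun y : 'rV[R]_2 => (y ord0 ord0, y ord0 ord_max))).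
case=> /eqP; rewrite coord sum3 => [|l /mu_out->]; last by rewrite mul0r.
move=> /eqP mux /eqP; rewrite coord sum3 => [|l /mu_out->]; last by rewrite mul0r.
move=> /eqP muy; move: Dneq0; rewrite /orient.
set xi := p i ord0 ord0; set xj := p j ord0 ord0; set xk := p k ord0 ord0.
set yi := p i ord0 ord_max; set yj := p j ord0 ord_max; set yk := p k ord0 ord_max.
set D := (_ - _) => Dneq0.
(* Cramer's rule for the system in mu j, mu k left after eliminating mu i. *)
have muj : mu j * D = 0.
  have -> : mu j * D =
      (yk - yi) * (mu i * xi + mu j * xj + mu k * xk - xi * (mu i + mu j + mu k))
    - (xk - xi) * (mu i * yi + mu j * yj + mu k * yk - yi * (mu i + mu j + mu k)).
    by rewrite /D; ring.
  by rewrite mux muy mu1 !mxE; ring.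
have muk : mu k * D = 0.
  have -> : mu k * D =
      (xj - xi) * (mu i * yi + mu j * yj + mu k * yk - yi * (mu i + mu j + mu k))
    - (yj - yi) * (mu i * xi + mu j * xj + mu k * xk - xi * (mu i + mu j + mu k)).
    by rewrite /D; ring.
  by rewrite mux muy mu1 !mxE; ring.
move: muj muk => /eqP; rewrite mulf_eq0 (negbTE Dneq0) orbF => /eqP muj0.
move=> /eqP; rewrite mulf_eq0 (negbTE Dneq0) orbF => /eqP muk0.
have mui0 : mu i = 0 by rewrite -mu1 muj0 muk0 !addr0.
move=> l; have [/mu_out //|] := boolP (l \notin [set i; j; k]).
by rewrite negbK !inE => /orP[/orP[]|] /eqP->.
Qed.

End Geometry.

(** * Integer chains given by vertex lists *)

Section IntegerChains.
Variable n : nat.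

Definition vset (l : seq nat) : {set 'I_n} := [set i | val i \in l].

Definition same_vset (l1 l2 : seq nat) : bool :=
  all (fun k => (k \in l1) == (k \in l2)) (iota 0 n).

Definition sub_vset (l1 l2 : seq nat) : bool :=
  all (fun k => (k \in l1) ==> (k \in l2)) (iota 0 n).

Definition simplex_list (l : seq nat) : bool := uniq l && all (fun k => k < n)%nat l.

Lemma in_vset i l : (i \in vset l) = (val i \in l).
Proof. by rewrite inE. Qed.

Lemma vset_eqE l1 l2 : (vset l1 == vset l2) = same_vset l1 l2.
Proof.
apply/eqP/allP => [l12 k | l12].
  rewrite mem_iota add0n => /andP[_ kn].
  by have := congr1 (fun S : {set 'I_n} => Ordinal kn \in S) l12; rewrite !in_vset => ->.
by apply/setP => i; rewrite !in_vset; apply/eqP/l12; rewrite mem_iota add0n ltn_ord.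
Qed.

Lemma vset_subE l1 l2 : (vset l1 \subset vset l2) = sub_vset l1 l2.
Proof.
apply/subsetP/allP => [l12 k | l12 i].
  rewrite mem_iota add0n => /andP[_ kn]; apply/implyP => kl1.
  by have := l12 (Ordinal kn); rewrite !in_vset; apply.
rewrite !in_vset => il1.
by have := l12 (val i); rewrite mem_iota add0n ltn_ord il1 => /(_ isT).
Qed.

Lemma vset_nil : vset [::] = set0.
Proof. by apply/setP => i; rewrite in_vset in_nil. Qed.

Lemma card_vset l : simplex_list l -> #|vset l| = size l.
Proof.
elim: l => [|k l IH]; first by rewrite vset_nil cards0.
case/andP=> /= /andP[kl ul] /andP[kn ln].
have -> : vset (k :: l) = Ordinal kn |: vset l.
  by apply/setP => i; rewrite in_setU1 !in_vset inE -val_eqE.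
by rewrite cardsU1 in_vset kl IH //; apply/andP.
Qed.

Lemma sum_vertices (F : nat -> R) l : simplex_list l ->
  \sum_(k <- l) F k = \sum_(v : 'I_n | val v \in l) F (val v).
Proof.
case/andP=> ul ln; rewrite -(big_mkord (mem l) F) -big_filter.
apply: perm_big; apply: uniq_perm => //; first by rewrite filter_uniq // iota_uniq.
move=> k; rewrite mem_filter mem_iota add0n /=.
by case kl: (k \in l) => //=; rewrite subn0 (allP ln k kl).
Qed.

(* A formal integer combination of simplices, each given by a list of its vertices;
   [ichain] is the real chain it denotes, in which repeated simplices add up. *)
Definition int_chain := seq (int * seq nat).

Implicit Types (L : int_chain) (t : {set 'I_n}).

Definition ichain L t := \sum_(x <- L) x.1%:~R * (t == vset x.2)%:R :> R.

Definition icoef L (l : seq nat) : int := \sum_(y <- L | same_vset l y.2) y.1.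

Definition iscale (a : int) L : int_chain := [seq (a * x.1, x.2) | x <- L].

Lemma ichain_cat L1 L2 t : ichain (L1 ++ L2) t = ichain L1 t + ichain L2 t.
Proof. by rewrite /ichain big_cat. Qed.

Lemma ichain_scale a L t : ichain (iscale a L) t = a%:~R * ichain L t.
Proof.
by rewrite /ichain big_map mulr_sumr; apply: eq_bigr => x _; rewrite /= rmorphM mulrA.
Qed.

Lemma ichainP L t :
  ichain L t = 0 \/ exists2 x, x \in L & t = vset x.2 /\ ichain L t = (icoef L x.2)%:~R.
Proof.
have [/hasP[x xL /eqP tx]|none] := boolP (has (fun x => t == vset x.2) L).
  right; exists x => //; split=> //.
  rewrite /ichain /icoef rmorph_sum [RHS]big_mkcond; apply: eq_bigr => y _.
  by rewrite tx vset_eqE; case: same_vset; rewrite ?mulr1 ?mulr0.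
left; rewrite /ichain big1_seq // => y /= yL.
suff /negbTE-> : t != vset y.2 by rewrite mulr0.
by apply: contra none => ty; apply/hasP; exists y.
Qed.

Lemma ichain_supp L t : ichain L t != 0 -> exists2 x, x \in L & t = vset x.2.
Proof.
by case: (ichainP L t) => [->|[x xL [tx _]]]; [rewrite eqxx | exists x].
Qed.

Lemma ichain_eq0 L t : all (fun x => icoef L x.2 == 0) L -> ichain L t = 0.
Proof.
by move=> /allP L0; case: (ichainP L t) => // -[x xL [_ ->]]; rewrite (eqP (L0 x xL)).
Qed.

Lemma ichain_norm_le1 L t : all (fun x => `|icoef L x.2| <= 1) L -> `|ichain L t| <= 1.
Proof.
move=> /allP L1; case: (ichainP L t) => [->|[x xL [_ ->]]]; first by rewrite normr0.
by rewrite -intr_norm lerz1 L1.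
Qed.

Lemma chain_ichain (K : {set {set 'I_n}}) k L :
  (forall x, x \in L -> vset x.2 \in K /\ #|vset x.2| = k.+1) -> is_chain K k (ichain L).
Proof. by move=> LK s /ichain_supp[x /LK xK ->]. Qed.

Lemma delta_vset l : delta (vset l) =1 ichain [:: (1, l)].
Proof. by move=> t; rewrite /delta /ichain big_seq1 mul1r; case: eqP. Qed.

Definition ibd_simplex (x : int * seq nat) : int_chain :=
  [seq ((-1) ^+ count (fun j => j < k)%nat x.2 * x.1, [seq j <- x.2 | j != k]) | k <- x.2].

Definition ibd L : int_chain := flatten (map ibd_simplex L).

(* Both sides vanish unless t is the face of vset l opposite some vertex v, and then the
   sign counts the vertices of t below v. *)
Lemma bd_vset l t : simplex_list l ->
  bd (fun s => (s == vset l)%:R) t =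
  \sum_(k <- l) (-1) ^+ count (fun j => j < k)%nat l * (t == vset [seq j <- l | j != k])%:R.
Proof.
move=> l_ok; rewrite sum_vertices // /bd big_mkcond [RHS]big_mkcond /=.
apply: eq_bigr => v _.
have in_face u : (u \in vset [seq j <- l | j != val v]) = (u != v) && (val u \in l).
  by rewrite in_vset mem_filter val_eqE.
have [vl|vl] := boolP (val v \in l); last first.
  case: (v \notin t) => //.
  case: (boolP (v |: t == vset l)) => [/eqP vtl|]; last by rewrite mulr0.
  by move: vl; rewrite -in_vset -vtl in_setU1 eqxx.
have [tE|tN] := eqVneq t (vset [seq j <- l | j != val v]).
  have vt : v \notin t by rewrite tE in_face eqxx.
  have -> : v |: t == vset l.
    by apply/eqP/setP => u; rewrite in_setU1 tE in_face in_vset; case: eqVneq => [->|].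
  have -> : [set u in t | val u < val v]%nat = vset [seq j <- l | j < val v]%nat.
    apply/setP => u; rewrite [LHS]inE tE in_face in_vset mem_filter.
    by case: eqVneq => [->|]; [rewrite ltnn andbF | rewrite andbC].
  rewrite vt mulr1 mulr1n mulr1 card_vset ?size_filter //.
  case/andP: l_ok => ul ln; rewrite /simplex_list filter_uniq //=.
  by apply/allP => k; rewrite mem_filter => /andP[_ /(allP ln)].
rewrite mulr0; case vt: (v \notin t) => //.
case: (boolP (v |: t == vset l)) => [/eqP vtl|]; last by rewrite mulr0.
case/eqP: tN; apply/setP => u; rewrite in_face -in_vset -vtl in_setU1.
by case: eqVneq => [->|] //=; rewrite (negbTE vt).
Qed.

Definition simplex_lists L : bool := all (fun x => simplex_list x.2) L.

Lemma bd_ichain L t : simplex_lists L -> bd (ichain L) t = ichain (ibd L) t.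
Proof.
elim: L t => [|x L IH] t.
  have nil0 s : ichain [::] s = 0 by rewrite /ichain big_nil.
  by move=> _; rewrite (eq_bd _ nil0) bd0 /= nil0.
case/andP=> x_ok L_ok.
rewrite (@eq_bd _ _ (fun s => x.1%:~R * (s == vset x.2)%:R + ichain L s)); last first.
  by move=> s; rewrite /ichain big_cons.
rewrite bdD bdZ IH // /ibd /= ichain_cat bd_vset // /ichain big_map mulr_sumr.
congr (_ + _); apply: eq_bigr => k _ /=.
by rewrite rmorphM /= rmorphXn /= rmorphN1 mulrA [_ * x.1%:~R]mulrC.
Qed.

Definition ipair (A B : int_chain) : int :=
  \sum_(x <- A) \sum_(y <- B) x.1 * y.1 * (same_vset x.2 y.2)%:R.

Lemma sum_indicator (g : {set 'I_n} -> R) a : \sum_t (t == a)%:R * g t = g a.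
Proof.
by rewrite (bigD1 a) //= eqxx mul1r big1 ?addr0 // => t /negbTE->; rewrite mul0r.
Qed.

Lemma pair_ichain A B : pair (ichain A) (ichain B) = (ipair A B)%:~R.
Proof.
rewrite /pair /ipair /ichain.
under eq_bigr do rewrite big_distrl; rewrite exchange_big rmorph_sum.
apply: eq_bigr => x _; under eq_bigr do rewrite big_distrr.
rewrite exchange_big rmorph_sum; apply: eq_bigr => y _ /=.
under eq_bigr do rewrite mulrACA; rewrite -mulr_sumr sum_indicator -vset_eqE.
by rewrite !rmorphM; case: eqP.
Qed.

Definition inorm1 L : int := \sum_(x <- L) `|x.1|.

Lemma sum_norm_ichain L : \sum_t `|ichain L t| <= (inorm1 L)%:~R.
Proof.
have -> : (inorm1 L)%:~R = \sum_t \sum_(x <- L) `|x.1%:~R| * (t == vset x.2)%:R :> R.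
  rewrite exchange_big /inorm1 rmorph_sum; apply: eq_bigr => x _ /=.
  under eq_bigr do rewrite mulrC; by rewrite sum_indicator intr_norm.
apply: ler_sum => t _; apply: le_trans (ler_norm_sum _ _ _) _.
by apply: ler_sum => x _; rewrite normrM normr_nat.
Qed.

Definition disjoint_lists (A B : int_chain) : bool :=
  all (fun x => all (fun y => ~~ same_vset x.2 y.2) B) A.

Lemma disjoint_ichain A B t : disjoint_lists A B ->
  ichain A t != 0 -> ichain B t != 0 -> False.
Proof.
move=> /allP AB /ichain_supp[x xA tx] /ichain_supp[y yB ty].
by have /allP/(_ y yB) := AB x xA; rewrite -vset_eqE -tx -ty eqxx.
Qed.

Lemma pairwise_disjoint_ichain (Ls : seq int_chain) i j t :
  pairwise disjoint_lists Ls -> (i < size Ls)%nat -> (j < size Ls)%nat ->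
  ichain (nth [::] Ls i) t != 0 -> ichain (nth [::] Ls j) t != 0 -> i = j.
Proof.
move=> /(pairwiseP [::]) disj iL jL zi zj.
case: (ltngtP i j) => [ij|ji|//]; exfalso.
  exact: disjoint_ichain (disj i j iL jL ij) zi zj.
exact: disjoint_ichain (disj j i jL iL ji) zj zi.
Qed.

End IntegerChains.

Arguments vset {n} l.

(** * The triangulated annulus *)

Definition annulus_triangles : seq (seq nat) :=
  [:: [:: 0; 1; 3]; [:: 1; 3; 4]; [:: 1; 2; 4]; [:: 2; 4; 5]; [:: 0; 2; 5]; [:: 0; 3; 5]]%nat.

Definition annulus : {set {set 'I_6}} :=
  [set s | (s != set0) && has (fun T => s \subset vset T) annulus_triangles].

Definition in_annulus (l : seq nat) : bool :=
  ~~ same_vset 6 l [::] && has (sub_vset 6 l) annulus_triangles.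

Lemma mem_annulus l : (vset l \in annulus) = in_annulus l.
Proof.
rewrite inE -vset_nil vset_eqE; congr (_ && _).
by apply: eq_has => T; apply: vset_subE.
Qed.

Lemma annulus_complex : is_complex annulus.
Proof.
split; first by rewrite inE eqxx.
move=> s t; rewrite !inE => /andP[_ /hasP[T TA sT]] ts ->.
by apply/hasP; exists T => //; apply: subset_trans ts sT.
Qed.

Lemma annulus_face s : s \in annulus ->
  exists2 T, T \in annulus_triangles & s \subset vset T.
Proof. by rewrite inE => /andP[_ /hasP[T TA sT]]; exists T. Qed.

Lemma annulus_triangles_ok :
  all (fun T => simplex_list 6 T && (size T == 3%nat)) annulus_triangles.
Proof. by []. Qed.

Lemma card_annulus_triangle T : T \in annulus_triangles -> #|@vset 6 T| = 3%nat.
Proof.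
by move=> /(allP annulus_triangles_ok)/andP[T_ok /eqP T3]; rewrite card_vset.
Qed.

Lemma annulus_2dim : is_2dim annulus.
Proof.
split.
  move=> s /annulus_face[T TA sT].
  by apply: leq_trans (subset_leq_card sT) _; rewrite card_annulus_triangle.
by exists (vset [:: 0; 1; 3]%nat); rewrite mem_annulus card_vset.
Qed.

Lemma triangles_annulus s : s \in triangles annulus ->
  exists2 T, T \in annulus_triangles & s = vset T.
Proof.
rewrite inE => /andP[/annulus_face[T TA sT] /eqP s3]; exists T => //.
by apply/eqP; rewrite eqEcard sT card_annulus_triangle // s3.
Qed.

Definition annulus_chain (k : nat) (L : int_chain) : bool :=
  all (fun x => [&& in_annulus x.2, simplex_list 6 x.2 & size x.2 == k.+1]) L.

Lemma annulus_chainP k L : annulus_chain k L -> is_chain annulus k (ichain L).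
Proof.
move=> /allP L_ok; apply: chain_ichain => x /L_ok /and3P[xA x_ok /eqP x_size].
by rewrite mem_annulus card_vset.
Qed.

Lemma annulus_chain_simplices k L : annulus_chain k L -> simplex_lists 6 L.
Proof. by move=> /allP L_ok; apply/allP => x /L_ok /and3P[]. Qed.

Definition izero (L : int_chain) : bool := all (fun x => icoef 6 L x.2 == 0) L.

Definition inner_loop : int_chain :=
  [:: (1, [:: 0; 1]%nat); (1, [:: 1; 2]%nat); (-1, [:: 0; 2]%nat)].
Definition zigzag : int_chain :=
  [:: (1, [:: 0; 3]%nat); (-1, [:: 1; 3]%nat); (1, [:: 1; 4]%nat);
      (-1, [:: 2; 4]%nat); (1, [:: 2; 5]%nat); (-1, [:: 0; 5]%nat)].
Definition outer_loop : int_chain :=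
  [:: (1, [:: 3; 4]%nat); (1, [:: 4; 5]%nat); (-1, [:: 3; 5]%nat)].
Definition zigzag_fill : int_chain :=
  [:: (1, [:: 0; 1; 3]%nat); (1, [:: 1; 2; 4]%nat); (-1, [:: 0; 2; 5]%nat)].
Definition annulus_fill : int_chain :=
  [:: (1, [:: 0; 1; 3]%nat); (-1, [:: 1; 3; 4]%nat); (1, [:: 1; 2; 4]%nat);
      (-1, [:: 2; 4; 5]%nat); (-1, [:: 0; 2; 5]%nat); (1, [:: 0; 3; 5]%nat)].
Definition radial_path : int_chain :=
  [:: (1, [:: 0; 1]%nat); (-1, [:: 1; 3]%nat); (1, [:: 3; 4]%nat)].

Definition cyc : {set 'I_6} -> R := ichain (iscale 2 inner_loop).

Lemma cyc_cycle : is_cycle annulus cyc.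
Proof.
split; first by apply: annulus_chainP.
by move=> t; rewrite bd_ichain // ichain_eq0 // /icoef unlock.
Qed.

Definition homologous_to_cyc (Lz LB : int_chain) : bool :=
  [&& annulus_chain 1 Lz, annulus_chain 2 LB, izero (ibd Lz)
    & izero (iscale 2 inner_loop ++ iscale (-1) Lz ++ iscale (-1) (ibd LB))].

Lemma homologous_to_cycP Lz LB : homologous_to_cyc Lz LB ->
  is_cycle annulus (ichain Lz) /\
  exists2 B, is_chain annulus 2 B & forall t, cyc t - ichain Lz t = bd B t.
Proof.
case/and4P=> Lz_ok LB_ok Lz_cycle LzB; split.
  split=> [|t]; first exact: annulus_chainP.
  by rewrite bd_ichain ?ichain_eq0 ?(annulus_chain_simplices Lz_ok).
exists (ichain LB) => [|t]; first exact: annulus_chainP.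
have := ichain_eq0 t LzB; rewrite !ichain_cat !ichain_scale.
rewrite -bd_ichain ?(annulus_chain_simplices LB_ok) // => sum0.
rewrite /cyc ichain_scale; lra.
Qed.

Definition parallel_cycles : seq int_chain :=
  [:: iscale 2 inner_loop; iscale 2 zigzag; iscale 2 outer_loop].
Definition parallel_fills : seq int_chain :=
  [:: [::]; iscale 2 zigzag_fill; iscale 2 annulus_fill].

Lemma annulus_cut_ge3 C : is_hom_edge_cut annulus cyc C -> leq 3 #|C|.
Proof.
move=> cutC; rewrite -[X in leq X _](card_ord 3).
apply: (cut_card_ge (z := fun i : 'I_3 => ichain (nth [::] parallel_cycles i))
  annulus_complex cutC).
  move=> i; apply: homologous_to_cycP (nth [::] parallel_fills i) _.
  by case: i => [[|[|[|//]]] ?]; rewrite /homologous_to_cyc /izero /icoef unlock.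
move=> i j e zi zj; apply: val_inj.
by apply: (pairwise_disjoint_ichain _ _ _ zi zj); rewrite ?ltn_ord.
Qed.

Definition phi_cut : {set 'I_6} -> R := fun t => 2^-1 * ichain radial_path t.

Lemma phi_cut_feasible : lp_feasible annulus cyc phi_cut.
Proof.
split.
  by move=> s; rewrite mulf_eq0 negb_or => /andP[_]; apply: annulus_chainP.
split.
  move=> s /triangles_annulus[T TA ->]; rewrite pairZl.
  have T_ok : simplex_lists 6 [:: (1, T)].
    by rewrite /simplex_lists /= andbT; case/andP: (allP annulus_triangles_ok T TA).
  rewrite (eq_pair _ (fun t => eq_bd t (delta_vset T))).
  rewrite (eq_pair _ (fun t => bd_ichain t T_ok)) pair_ichain.
  suff /allP/(_ T TA)/eqP-> : all (fun T => ipair 6 radial_path (ibd [:: (1, T)]) == 0)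
    annulus_triangles by rewrite mulr0.
  by rewrite /ipair unlock.
rewrite /cyc pairZl pair_ichain.
have -> : ipair 6 radial_path (iscale 2 inner_loop) = 2 by rewrite /ipair unlock.
by rewrite mulVf // pnatr_eq0.
Qed.

Lemma phi_cut_norm : norm1 annulus phi_cut <= 3%:R / 2%:R.
Proof.
apply: le_trans (norm1_le_sum _ _) _.
under eq_bigr do rewrite normrM ger0_norm ?invr_ge0 ?ler0n //.
rewrite -mulr_sumr mulrC ler_pM2r ?invr_gt0 ?ltr0n //.
apply: le_trans (sum_norm_ichain 6 radial_path) _.
by have -> : inorm1 radial_path = 3 by rewrite /inorm1 unlock.
Qed.

Definition radial_cut : {set {set 'I_6}} :=
  [set vset [:: 0; 1]%nat; vset [:: 1; 3]%nat; vset [:: 3; 4]%nat].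

Lemma radial_cut_card : #|radial_cut| = 3%nat.
Proof. by rewrite /radial_cut setUC cardsU1 cards2 in_set2 !vset_eqE. Qed.

Lemma radial_cut_cut : is_hom_edge_cut annulus cyc radial_cut.
Proof.
apply: (cocycle_supported_cut phi_cut_feasible).
  apply/subsetP => s; rewrite !in_setU !in_set1 => /orP[/orP[]|] /eqP->;
  by rewrite in_set mem_annulus card_vset.
move=> t; rewrite mulf_eq0 negb_or => /andP[_ /ichain_supp[x xL ->]].
by move: xL; rewrite !inE => /or3P[] /eqP->; rewrite eqxx ?orbT.
Qed.

Lemma annulus_min_cut : min_cut_is annulus cyc 3.
Proof.
split; last exact: annulus_cut_ge3.
by exists radial_cut; split; [apply: radial_cut_cut | apply: radial_cut_card].
Qed.

Definition dual_fill : int_chain := iscale (-1) (zigzag_fill ++ annulus_fill).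

Lemma dual_fill_feasible : dual_feasible annulus cyc (ichain dual_fill) (3%:R / 2%:R).
Proof.
split; first by apply: annulus_chainP.
move=> e _.
have -> : bd (ichain dual_fill) e + 3%:R / 2%:R * cyc e
    = ichain (ibd dual_fill ++ iscale 3 inner_loop) e.
  rewrite ichain_cat bd_ichain // /cyc !ichain_scale mulrA; congr (_ + _ * _).
  by rewrite -[2%:~R]/(2%:R) -[3%:~R]/(3%:R) mulfVK // pnatr_eq0.
by apply: ichain_norm_le1; rewrite /icoef unlock.
Qed.

(** * A straight-line embedding of the annulus *)

Definition px : seq int := [:: 0; -2; 2; -6; 0; 6].
Definition py : seq int := [:: 2; -1; -1; 3; -6; 3].

Definition pt (i : 'I_6) : 'rV[R]_2 :=
  \row_(j < 2) (nth 0 (if val j == 0%nat then px else py) i)%:~R.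

Lemma pt_x i : pt i ord0 ord0 = (nth 0 px i)%:~R.
Proof. by rewrite mxE. Qed.

Lemma pt_y i : pt i ord0 ord_max = (nth 0 py i)%:~R.
Proof. by rewrite mxE. Qed.

Definition int_form (a b c : int) (k : nat) : int := a * nth 0 px k + b * nth 0 py k + c.

Lemma affine_form_pt a b c i :
  affine_form a%:~R b%:~R c%:~R (pt i) = (int_form a b c i)%:~R.
Proof. by rewrite /affine_form pt_x pt_y !rmorphD !rmorphM. Qed.

Definition int_orient (i j k : nat) : int :=
  (nth 0 px j - nth 0 px i) * (nth 0 py k - nth 0 py i)
  - (nth 0 px k - nth 0 px i) * (nth 0 py j - nth 0 py i).

Lemma orient_pt i j k : orient (pt i) (pt j) (pt k) = (int_orient i j k)%:~R.
Proof. by rewrite /orient !pt_x !pt_y !(rmorphB, rmorphM). Qed.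

Definition nondegenerate (T : seq nat) : bool :=
  if T is [:: a; b; c] then simplex_list 6 T && (int_orient a b c != 0) else false.

Lemma nondegenerateP T : nondegenerate T -> aff_indep pt (vset T).
Proof.
case: T => [|a [|b [|c [|]]]] //= /andP[/andP[abc_uniq abc_lt6] D].
move: abc_uniq abc_lt6; rewrite /= !inE !negb_or !andbT => /andP[/andP[ab ac] bc].
move=> /and3P[a6 b6 c6].
have -> : vset [:: a; b; c] = [set inord a; inord b; inord c] :> {set 'I_6}.
  by apply/setP => i; rewrite in_vset !inE -!val_eqE /= !inordK // orbA.
have inord_neq u v : (u < 6)%nat -> (v < 6)%nat -> u != v -> inord u != inord v :> 'I_6.
  by move=> u6 v6; apply: contra => /eqP/(congr1 val); rewrite /= !inordK // => ->.
apply: aff_indep3; rewrite ?inord_neq // orient_pt !inordK //.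
by rewrite intr_eq0.
Qed.

(* [separates T1 T2 (a, b, c)]: the line a x + b y + c = 0 leaves T1 on the side <= 0
   and T2 on the side >= 0, and meets T1 only in vertices of T2. *)
Definition separates (T1 T2 : seq nat) (abc : int * int * int) : bool :=
  let: (a, b, c) := abc in
  all (fun k => [&& (k \in T1) ==> (int_form a b c k <= 0),
                    (k \in T2) ==> (0 <= int_form a b c k)
                  & (k \in T1) ==> (int_form a b c k != 0) || (k \in T2)]) (iota 0 6).

Lemma separatesP T1 T2 abc x : separates T1 T2 abc ->
  in_hull pt (vset T1) x -> in_hull pt (vset T2) x -> in_hull pt (vset T1 :&: vset T2) x.
Proof.
case: abc => [[a b] c] /allP sep.
have in_iota (i : 'I_6) : val i \in iota 0 6 by rewrite mem_iota add0n ltn_ord.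
apply: (@in_hull_meet_separated _ _ a%:~R b%:~R c%:~R) => i;
  rewrite affine_form_pt in_vset; case/and3P: (sep _ (in_iota i)) => T1_le0 T2_ge0 T1_zero.
- by move=> iT1; move: T1_le0; rewrite iT1 lerz0.
- by move=> iT2; move: T2_ge0; rewrite iT2 ler0z.
- move=> iT1 /eqP; rewrite intr_eq0 in_vset.
  by move: T1_zero; rewrite iT1 /= => /orP[/negbTE->|].
Qed.

Definition separators : seq (seq nat * seq nat * (int * int * int)) := [::
  ([:: 0; 1; 3]%nat, [:: 1; 3; 4]%nat, ((-4), (-4), (-12)));
  ([:: 0; 1; 3]%nat, [:: 1; 2; 4]%nat, ((0), (-12), (-12)));
  ([:: 0; 1; 3]%nat, [:: 2; 4; 5]%nat, ((1), (-1), (-3)));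
  ([:: 0; 1; 3]%nat, [:: 0; 2; 5]%nat, ((1), (0), (0)));
  ([:: 0; 1; 3]%nat, [:: 0; 3; 5]%nat, ((1), (6), (-12)));
  ([:: 1; 3; 4]%nat, [:: 0; 1; 3]%nat, ((1), (1), (3)));
  ([:: 1; 3; 4]%nat, [:: 1; 2; 4]%nat, ((5), (2), (12)));
  ([:: 1; 3; 4]%nat, [:: 2; 4; 5]%nat, ((1), (0), (0)));
  ([:: 1; 3; 4]%nat, [:: 0; 2; 5]%nat, ((1), (1), (-1)));
  ([:: 1; 3; 4]%nat, [:: 0; 3; 5]%nat, ((1), (2), (0)));
  ([:: 1; 2; 4]%nat, [:: 0; 1; 3]%nat, ((-12), (12), (-12)));
  ([:: 1; 2; 4]%nat, [:: 1; 3; 4]%nat, ((-5), (-2), (-12)));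
  ([:: 1; 2; 4]%nat, [:: 2; 4; 5]%nat, ((5), (-2), (-12)));
  ([:: 1; 2; 4]%nat, [:: 0; 2; 5]%nat, ((1), (1), (-1)));
  ([:: 1; 2; 4]%nat, [:: 0; 3; 5]%nat, ((-5), (11), (-3)));
  ([:: 2; 4; 5]%nat, [:: 0; 1; 3]%nat, ((-12), (1), (-2)));
  ([:: 2; 4; 5]%nat, [:: 1; 3; 4]%nat, ((-12), (-2), (-12)));
  ([:: 2; 4; 5]%nat, [:: 1; 2; 4]%nat, ((-5), (2), (12)));
  ([:: 2; 4; 5]%nat, [:: 0; 2; 5]%nat, ((-4), (4), (12)));
  ([:: 2; 4; 5]%nat, [:: 0; 3; 5]%nat, ((-8), (12), (12)));
  ([:: 0; 2; 5]%nat, [:: 0; 1; 3]%nat, ((-12), (-6), (12)));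
  ([:: 0; 2; 5]%nat, [:: 1; 3; 4]%nat, ((-12), (-12), (-12)));
  ([:: 0; 2; 5]%nat, [:: 1; 2; 4]%nat, ((-12), (-12), (12)));
  ([:: 0; 2; 5]%nat, [:: 2; 4; 5]%nat, ((1), (-1), (-3)));
  ([:: 0; 2; 5]%nat, [:: 0; 3; 5]%nat, ((-1), (6), (-12)));
  ([:: 0; 3; 5]%nat, [:: 0; 1; 3]%nat, ((-1), (-6), (12)));
  ([:: 0; 3; 5]%nat, [:: 1; 3; 4]%nat, ((-8), (-12), (-12)));
  ([:: 0; 3; 5]%nat, [:: 1; 2; 4]%nat, ((-5), (-12), (-2)));
  ([:: 0; 3; 5]%nat, [:: 2; 4; 5]%nat, ((1), (-5), (9)));
  ([:: 0; 3; 5]%nat, [:: 0; 2; 5]%nat, ((1), (-6), (12)))].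
Definition separator (T1 T2 : seq nat) : int * int * int :=
  head (0, 0, 0) [seq x.2 | x <- separators & (x.1.1 == T1) && (x.1.2 == T2)].

Lemma separators_ok : all (fun T1 => all (fun T2 =>
  (T1 == T2) || separates T1 T2 (separator T1 T2)) annulus_triangles) annulus_triangles.
Proof. by vm_compute. Qed.

Lemma annulus_triangles_nondegenerate : all nondegenerate annulus_triangles.
Proof. by vm_compute. Qed.

Lemma annulus_embeds : embeds_in_R2 annulus pt.
Proof.
have indep T : T \in annulus_triangles -> aff_indep pt (vset T).
  by move=> TA; apply/nondegenerateP/(allP annulus_triangles_nondegenerate).
split=> [s /annulus_face[T TA sT]|s t x].
  exact: aff_indep_sub sT (indep T TA).
move=> /annulus_face[T1 T1A sT1] /annulus_face[T2 T2A tT2].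
apply: in_hull_meet_faces sT1 tT2 (indep T1 T1A) (indep T2 T2A) _.
have /orP[/eqP <-|sep] := allP (allP separators_ok T1 T1A) T2 T2A.
  by rewrite setIid.
exact: separatesP sep.
Qed.

Theorem mainTheorem14 :
  exists (n : nat) (K : {set {set 'I_n}}) (p : 'I_n -> 'rV[R]_2)
         (c : {set 'I_n} -> R),
    is_complex K /\ is_2dim K /\ embeds_in_R2 K p /\ is_cycle K c /\
    min_cut_is K c 3 /\
    lp_min_is K c (3%:R / 2%:R) /\
    dual_max_is K c (3%:R / 2%:R).
Proof.
exists 6%nat, annulus, pt, cyc.
have [lp_min dual_max] := lp_dual_optimal phi_cut_feasible dual_fill_feasible phi_cut_norm.
split; first exact: annulus_complex.
split; first exact: annulus_2dim.
split; first exact: annulus_embeds.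
split; first exact: cyc_cycle.
by split; first exact: annulus_min_cut.
Qed.
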